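(* Let $K\ge1$ and $\gamma\in(0,1]$. For each $i\in[K]$ let $E_i$ be a nonnegative random variable with $\mathbb E[E_i]\le1$ when the $i$-th null hypothesis is true. Consider the following sequential procedure: for $t=1,\dots,K$, an index $I_t$ not previously selected is chosen, a current proxy $F^{(t)}_{I_t}\ge0$ is formed (an arbitrary nonnegative random variable, which may depend on initial proxies, on previous indicators $T_{I_1},\dots,T_{I_{t-1}}$, and on previously queried values $E_{I_s}$ with $s<t$, $T_{I_s}=1$), then $T_{I_t}$ is drawn, using fresh independent randomness, with $T_{I_t}\sim\mathrm{Bern}\big((1-\gamma(F^{(t)}_{I_t})^{-1})_+\big)$ given everything observed so far and all $E_j$, and one sets $\tilde E_{I_t}:=F^{(t)}_{I_t}$ if $T_{I_t}=0$ and $\tilde E_{I_t}:=(1-\gamma)E_{I_t}$ if $T_{I_t}=1$ (in which case $E_{I_t}$ is queried). Then each resulting $\tilde E_i$, $i\in[K]$, is a valid e-value: $\tilde E_i\ge0$ and $\mathbb E[\tilde E_i]\le1$ when the $i$-th null is true.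
   Context: $x_+=\max(x,0)$, with $(1-\gamma F^{-1})_+=0$ when $F=0$. *)

From mathcomp Require Import all_boot all_order all_algebra.
From mathcomp Require Import all_classical all_reals all_analysis.
Set Implicit Arguments. Unset Strict Implicit. Unset Printing Implicit Defensive.
Import Order.TTheory GRing.Theory Num.Theory.
Local Open Scope ring_scope.

Definition bern_prob (R : realType) (gamma F : R) : R :=
  if F == 0 then 0 else Num.max 0 (1 - gamma / F).

(* Resulting e-value for hypothesis i: at the (unique) step t with I_t = i,
   tilde E_i = (1 - gamma) E_i if T_{I_t} = 1, and F^{(t)}_{I_t} otherwise.
   Steps are indexed by t : 'I_K (t = 0 .. K-1 stands for 1 .. K). *)
Definition etilde (R : realType) (Omega : Type) (K : nat) (gamma : R)
  (E : 'I_K -> Omega -> R) (I : 'I_K -> Omega -> 'I_K)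
  (F : 'I_K -> Omega -> R) (T : 'I_K -> Omega -> bool)
  (i : 'I_K) (w : Omega) : R :=
  \sum_(t < K | I t w == i) (if T t w then (1 - gamma) * E i w else F t w).

From mathcomp Require Import all_boot all_order all_algebra.
From mathcomp Require Import all_classical all_reals all_analysis.
From mathcomp Require Import measurable_realfun lra.
Import Order.TTheory GRing.Theory Num.Theory numFieldNormedType.Exports.
Import HBNNSimple.
Local Open Scope classical_set_scope.
Local Open Scope ring_scope.

(* At the unique step t at which i is selected, the resulting e-value is
   (1 - gamma) E_i if E_i is queried and the proxy F_t otherwise, so
   tilde E_i <= (1 - gamma) E_i + sum_t F_t 1{I_t = i, T_t = 0}.
   As I_t and F_t are functions of the history H_t and, given H_t, T_t is
   Bernoulli with parameter p(F_t) = (1 - gamma / F_t)_+, the t-th summand has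
   expectation E[F_t (1 - p(F_t)) 1{I_t = i}] = E[min(F_t, gamma) 1{I_t = i}]
   <= gamma P(I_t = i).  The events {I_t = i} partition the sample space, hence
   E[tilde E_i] <= (1 - gamma) + gamma = 1 under the null. *)

Section bern_prob.
Variable R : realType.
Implicit Types gamma F : R.

Lemma bern_prob_ge0 gamma F : 0 <= bern_prob gamma F.
Proof. by rewrite /bern_prob; case: ifP; rewrite // le_max lexx. Qed.

Lemma bern_prob_le1 gamma F : 0 <= gamma -> 0 <= F -> bern_prob gamma F <= 1.
Proof.
move=> g0 F0; rewrite /bern_prob; case: ifP => // _.
by rewrite ge_max ler01 gerBl divr_ge0.
Qed.

Lemma mulr_bern_probC gamma F : 0 <= gamma -> 0 <= F ->
  F * (1 - bern_prob gamma F) = Num.min F gamma.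
Proof.
move=> g0 F0; rewrite /bern_prob; case: eqP => [->|/eqP Fn0].
  by rewrite mul0r min_l.
have Fp : 0 < F by rewrite lt_def Fn0.
have [gF|Fg] := leP gamma F.
  rewrite max_r ?subr_ge0 ?ler_pdivrMr ?mul1r// opprB addrC subrK.
  by rewrite mulrC divfK.
rewrite max_l ?subr0 ?mulr1//.
by rewrite subr_le0 ler_pdivlMr// mul1r ltW.
Qed.

Lemma measurable_bern_prob gamma : measurable_fun setT (bern_prob gamma).
Proof.
apply: (measurable_fun_if measurableT); first exact: measurable_fun_eqr.
  exact: measurable_cst.
have -> : setT `&` (fun x : R => x == 0) @^-1` [set false] = ~` [set 0].
  by apply/seteqP; split => x /=; [case=> _ /negbT/eqP|move/eqP/negbTE].
apply: open_continuous_measurable_fun.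
  exact/closed_openC/(compact_closed (@Rhausdorff R))/compact_set1.
move=> x /set_mem x0.
apply: (@continuous_max _ _ (cst 0) (fun x : R => 1 - gamma / x)).
  exact: cst_continuous.
apply: continuousD; first exact: cst_continuous.
apply/continuousN/continuousM; first exact: cst_continuous.
exact/inv_continuous/eqP.
Qed.

End bern_prob.

Section integral_comp_density.
Local Open Scope ereal_scope.
Context {d dX : measure_display} {T : measurableType d} {X : measurableType dX}.
Context {R : realType} {nu mu : {measure set T -> \bar R}}.
Context {D : set T} {H : T -> X} {rho : T -> R}.
Hypotheses (mD : measurable D) (mH : measurable_fun setT H).
Hypotheses (rho0 : forall w, (0 <= rho w)%R) (mrho : measurable_fun setT rho).
Hypothesis nuHD : forall B, measurable B ->
  nu (H @^-1` B `&` D) = \int[mu]_(w in H @^-1` B) (rho w)%:E.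

Let mHB B : measurable B -> measurable (H @^-1` B).
Proof. by move=> mB; rewrite -[X in measurable X]setTI; exact: mH. Qed.

Lemma integral_indic_comp_density B : measurable B ->
  \int[nu]_(w in D) (\1_B (H w))%:E = \int[mu]_w ((\1_B (H w))%:E * (rho w)%:E).
Proof.
move=> mB; rewrite (integral_indic _ mD (mHB _ mB)) nuHD// integral_mkcond.
by apply: eq_integral => w _; rewrite epatch_indic /= muleC.
Qed.

Lemma integral_nnsfun_comp_density (h : {nnsfun X >-> R}) :
  \int[nu]_(w in D) (h (H w))%:E = \int[mu]_w ((h (H w))%:E * (rho w)%:E).
Proof.
have mhH y : measurable_fun setT (fun w => (\1_(h @^-1` [set y]) (H w) : R)%:E).
  by apply/measurable_EFinP; apply: measurableT_comp => //; exact: measurable_indic.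
have hE w : (h (H w))%:E =
    \sum_(y \in range h) y%:E * (\1_(h @^-1` [set y]) (H w))%:E.
  by rewrite fimfunE -fsumEFin//; apply: eq_fsbigr => y _; rewrite EFinM.
have hrhoE w : (h (H w))%:E * (rho w)%:E =
    \sum_(y \in range h) y%:E * (\1_(h @^-1` [set y]) (H w))%:E * (rho w)%:E.
  by rewrite hE ge0_mule_fsuml// => y; exact: nnfun_muleindic_ge0.
under eq_integral do rewrite hE.
under [RHS]eq_integral do rewrite hrhoE.
rewrite !ge0_integral_fsum//; first last.
- by move=> y w _; exact: nnfun_muleindic_ge0.
- by move=> y; apply/measurable_funTS/emeasurable_funM.
- by move=> y w _; apply: mule_ge0; [exact: nnfun_muleindic_ge0|rewrite lee_fin].
- move=> y; apply: emeasurable_funM; first exact: emeasurable_funM.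
  exact/measurable_EFinP.
apply: eq_fsbigr => _ /set_mem[x _ <-].
under [RHS]eq_integral do rewrite -muleA.
rewrite !ge0_integralZl ?lee_fin//; first last.
- exact: measurable_funTS.
- by move=> w _; apply: mule_ge0; rewrite lee_fin.
- by apply: emeasurable_funM => //; exact/measurable_EFinP.
by rewrite integral_indic_comp_density//; exact: measurable_funPTI.
Qed.

Lemma integral_comp_density (g : X -> \bar R) :
    (forall x, 0 <= g x) -> measurable_fun setT g ->
  \int[nu]_(w in D) g (H w) = \int[mu]_w (g (H w) * (rho w)%:E).
Proof.
move=> g0 mg; pose h := nnsfun_approx measurableT mg.
have hg x : (EFin \o h ^~ x) @ \oo --> g x by exact: cvg_nnsfun_approx.
have h_nd x : {homo (fun n => (h n x)%:E) : m n / (m <= n)%N >-> m <= n}.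
  by move=> m n mn; rewrite lee_fin; exact/lefP/nd_nnsfun_approx.
have mhH n : measurable_fun setT (fun w => (h n (H w))%:E).
  by apply/measurable_EFinP; exact: measurableT_comp.
transitivity (limn (fun n => \int[nu]_(w in D) (h n (H w))%:E)).
  rewrite -monotone_convergence//.
  - by apply: eq_integral => w _; apply/esym/cvg_lim => //; exact: hg.
  - by move=> n; exact: measurable_funTS.
  - by move=> n w _; rewrite lee_fin.
transitivity (limn (fun n => \int[mu]_w ((h n (H w))%:E * (rho w)%:E))).
  by congr (limn _); apply/funext => n; exact: integral_nnsfun_comp_density.
rewrite -monotone_convergence//.
- by apply: eq_integral => w _; apply/cvg_lim => //; apply: cvgeZr => //; exact: hg.
- by move=> n; apply: emeasurable_funM => //; exact/measurable_EFinP.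
- by move=> n w _; apply: mule_ge0; rewrite lee_fin.
- by move=> w _ m n mn; apply: lee_wpmul2r; [rewrite lee_fin|exact: h_nd].
Qed.

End integral_comp_density.

Lemma measureD_integral d (T : measurableType d) (R : realType)
    (mu : {measure set T -> \bar R}) (A S : set T) (p : T -> R) :
    measurable A -> measurable S -> (mu A < +oo)%E ->
    measurable_fun setT p -> (forall w, 0 <= p w <= 1) ->
    mu (A `&` S) = (\int[mu]_(w in A) (p w)%:E)%E ->
  mu (A `\` S) = (\int[mu]_(w in A) (1 - p w)%:E)%E.
Proof.
move=> mA mS muA mp p01 muAS.
have mpA : measurable_fun A (fun w => (p w)%:E).
  exact/measurable_funTS/measurable_EFinP.
have mpCA : measurable_fun A (fun w => (1 - p w)%:E).
  by apply/measurable_funTS/measurable_EFinP/measurable_funB => //;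
    exact: measurable_cst.
have muAE : mu A = (\int[mu]_(w in A) (p w)%:E + \int[mu]_(w in A) (1 - p w)%:E)%E.
  rewrite -ge0_integralD//; last 2 first.
  - by move=> w _; rewrite lee_fin; have /andP[] := p01 w.
  - by move=> w _; rewrite lee_fin subr_ge0; have /andP[] := p01 w.
  under eq_integral do rewrite -EFinD addrC subrK.
  by rewrite integral_cst// mul1e.
transitivity (mu A - mu (A `&` S))%E; first exact: measureD.
rewrite muAS muAE addeC addeK// -muAS ge0_fin_numE// (le_lt_trans _ muA)//.
by rewrite le_measure ?inE//; exact: measurableI.
Qed.

Lemma integral_unqueried_proxy_le d (Omega : measurableType d)
    dX (X : measurableType dX) (R : realType) (P : probability Omega R)
    (H : Omega -> X) (f : X -> R) (gamma : R) (S : set Omega) (B : set X) :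
    0 <= gamma -> measurable_fun setT H -> measurable_fun setT f ->
    (forall w, 0 <= f (H w)) -> measurable S -> measurable B ->
    (forall A, measurable A -> P (H @^-1` A `&` S)%classic =
       (\int[P]_(w in H @^-1` A) (bern_prob gamma (f (H w)))%:E)%E) ->
  (\int[P]_(w in H @^-1` B `\` S) (f (H w))%:E <= gamma%:E * P (H @^-1` B))%E.
Proof.
move=> g0 mH mf f0 mS mB PHS.
have mHA A : measurable A -> measurable (H @^-1` A).
  by move=> mA; rewrite -[X in measurable X]setTI; exact: mH.
pose p w := bern_prob gamma (f (H w)).
have mp : measurable_fun setT p.
  by apply: measurableT_comp; [exact: measurable_bern_prob|exact: measurableT_comp].
have PHnotS A : measurable A ->
    P (H @^-1` A `&` ~` S)%classic = (\int[P]_(w in H @^-1` A) (1 - p w)%:E)%E.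
  move=> mA; rewrite -setDE; apply: measureD_integral => //; first exact: mHA.
  - by rewrite (le_lt_trans (probability_le1 _ (mHA _ mA))) ?ltry.
  - by move=> w; rewrite bern_prob_ge0 bern_prob_le1.
  - exact: PHS.
(* [f] is only known to be nonnegative on the range of [H]. *)
pose g := (fun x => (Num.max 0 (f x))%:E) \_ B.
have g_ge0 x : (0 <= g x)%E.
  by rewrite /g patchE; case: ifP; rewrite // lee_fin le_max lexx.
have mg : measurable_fun setT g.
  apply/(measurable_restrictT _ mB)/measurable_funTS/measurable_EFinP.
  by apply: measurable_maxr => //; exact: measurable_cst.
rewrite setDE setIC integral_mkcondr.
have -> : (\int[P]_(w in ~` S) ((fun w => (f (H w))%:E) \_ (H @^-1` B)) w =
    \int[P]_(w in ~` S) g (H w))%E.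
  apply: eq_integral => w _; rewrite /g !patchE.
  have -> : (w \in H @^-1` B) = (H w \in B) by [].
  by case: ifP => // _; rewrite max_r.
rewrite (integral_comp_density (measurableC mS) mH _ _ PHnotS)//; first last.
- by apply: measurable_funB => //; exact: measurable_cst.
- by move=> w; rewrite subr_ge0 bern_prob_le1.
have -> : (gamma%:E * P (H @^-1` B) =
    \int[P]_w ((cst gamma%:E) \_ (H @^-1` B)) w)%E.
  by rewrite -integral_mkcond integral_cst//; exact: mHA.
apply: ge0_le_integral => //.
- by move=> w _; rewrite mule_ge0// lee_fin subr_ge0 bern_prob_le1.
- apply: emeasurable_funM; first exact: measurableT_comp.
  by apply/measurable_EFinP/measurable_funB => //; exact: measurable_cst.
- apply/(measurable_restrictT _ (mHA _ mB)).
  exact: measurable_cst.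
move=> w _; rewrite /g !patchE.
have -> : (w \in H @^-1` B) = (H w \in B) by [].
case: ifP => _; last by rewrite mul0e.
by rewrite -EFinM lee_fin max_r// mulr_bern_probC// ge_min lexx orbT.
Qed.

Lemma probability_partition_sum d (T : measurableType d) (R : realType)
    (P : probability T R) n (A : 'I_n -> set T) :
    (forall k, measurable (A k)) -> (forall w, exists! k, A k w) ->
  (\sum_(k < n) P (A k) = 1)%E.
Proof.
move=> mA hA; rewrite -measure_bigsetU_ord//.
- have -> : \big[setU/set0]_(k < n) A k = setT; last exact: probability_setT.
  apply/seteqP; split => // w _; have [k [Akw _]] := hA w.
  by rewrite (bigD1 k)//=; left.
- apply/trivIsetP => k l _ _ kl; apply/seteqP; split => // w [Akw Alw].
  have [k0 [_ k0u]] := hA w.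
  by move/eqP: kl; rewrite -(k0u _ Akw) -(k0u _ Alw).
Qed.

Section etilde.
Context {R : realType} {Omega : Type} {K : nat} (gamma : R).
Context (E : 'I_K -> Omega -> R) (I : 'I_K -> Omega -> 'I_K).
Context (F : 'I_K -> Omega -> R) (T : 'I_K -> Omega -> bool).
Local Notation etilde := (etilde gamma E I F T).

Lemma etilde_ge0 i w : gamma <= 1 -> 0 <= E i w -> (forall t, 0 <= F t w) ->
  0 <= etilde i w.
Proof.
move=> g1 E0 F0; apply: sumr_ge0 => t _.
by case: ifP => // _; rewrite mulr_ge0// subr_ge0.
Qed.

Lemma etildeE {i w t0} : injective (I ^~ w) -> I t0 w = i ->
  etilde i w = if T t0 w then (1 - gamma) * E i w else F t0 w.
Proof.
by move=> hI It0; rewrite /etilde (big_pred1 t0)// => t; rewrite /= -It0 (inj_eq hI).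
Qed.

Lemma etilde_le i w : injective (I ^~ w) ->
    gamma <= 1 -> 0 <= E i w -> (forall t, 0 <= F t w) ->
  etilde i w <= (1 - gamma) * E i w +
    \sum_(t < K) F t w * \1_([set w | I t w == i] `\` [set w | T t w]) w.
Proof.
move=> hI g1 E0 F0.
have [t0 It0] : exists t0, I t0 w = i.
  by have [g _ gK] := injF_bij hI; exists (g i); exact: gK.
have E1_ge0 : 0 <= (1 - gamma) * E i w by rewrite mulr_ge0// subr_ge0.
set U := fun t => [set w | I t w == i] `\` [set w | T t w].
have rest_ge0 : 0 <= \sum_(t < K | t != t0) F t w * \1_(U t) w.
  by apply: sumr_ge0 => t _; rewrite mulr_ge0.
rewrite (etildeE hI It0) (bigD1 t0)//= indicE.
case hT: (T t0 w).
  by rewrite memNset ?mulr0 ?add0r ?lerDl//= => -[_]; rewrite hT.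
by rewrite mem_set ?mulr1 /U /= ?It0 ?eqxx ?hT//; lra.
Qed.

End etilde.

Section integral_etilde.
Context {d : measure_display} {Omega : measurableType d} {R : realType} {K : nat}.
Context {gamma : R} {E : 'I_K -> Omega -> R} {I : 'I_K -> Omega -> 'I_K}.
Context {F : 'I_K -> Omega -> R} {T : 'I_K -> Omega -> bool} {i : 'I_K}.
Hypotheses (mI : forall t, measurable [set w | I t w == i])
  (mT : forall t, measurable [set w | T t w])
  (mE : measurable_fun setT (E i)) (mF : forall t, measurable_fun setT (F t)).

Let mU t : measurable ([set w | I t w == i] `\` [set w | T t w]).
Proof. exact: measurableD. Qed.

Lemma measurable_etilde : measurable_fun setT (etilde gamma E I F T i).
Proof.
have -> : etilde gamma E I F T i = fun w => \sum_(t < K)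
    if I t w == i then (if T t w then (1 - gamma) * E i w else F t w) else 0.
  by apply/funext => w; rewrite /etilde big_mkcond.
apply: measurable_sum => t; apply: measurable_fun_ifT.
- by apply: (measurable_fun_bool true); rewrite setTI; exact: mI.
- apply: measurable_fun_ifT; last exact: mF.
    by apply: (measurable_fun_bool true); rewrite setTI; exact: mT.
  by apply: measurable_funM => //; exact: measurable_cst.
- exact: measurable_cst.
Qed.

Lemma integral_etilde_le (mu : {measure set Omega -> \bar R}) :
    (forall w, injective (I ^~ w)) -> gamma <= 1 ->
    (forall w, 0 <= E i w) -> (forall t w, 0 <= F t w) ->
  (\int[mu]_w (etilde gamma E I F T i w)%:E <=
    (1 - gamma)%:E * \int[mu]_w (E i w)%:E +
    \sum_(t < K) \int[mu]_(w in [set w | I t w == i] `\` [set w | T t w])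
      (F t w)%:E)%E.
Proof.
move=> hI g1 E0 F0.
set U := fun t => [set w | I t w == i] `\` [set w | T t w].
have mFU t : measurable_fun setT (fun w => (F t w * \1_(U t) w)%:E).
  by apply/measurable_EFinP/measurable_funM => //; exact/measurable_indic/mU.
have FU_ge0 t w : (0 <= (F t w * \1_(U t) w)%:E)%E by rewrite lee_fin mulr_ge0// indicE.
have mE1 : measurable_fun setT (fun w => ((1 - gamma) * E i w)%:E).
  by apply/measurable_EFinP/measurable_funM => //; exact: measurable_cst.
apply: (@le_trans _ _ (\int[mu]_w
    (((1 - gamma) * E i w)%:E + \sum_(t < K) (F t w * \1_(U t) w)%:E))%E).
  apply: ge0_le_integral => //.
  - by move=> w _; rewrite lee_fin etilde_ge0.
  - exact/measurable_EFinP/measurable_etilde.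
  - by apply: emeasurable_funD => //; exact: emeasurable_sum.
  - by move=> w _; rewrite sumEFin -EFinD lee_fin etilde_le.
rewrite ge0_integralD//; last 3 first.
- by move=> w _; rewrite lee_fin mulr_ge0// subr_ge0.
- by move=> w _; rewrite sume_ge0.
- exact: emeasurable_sum.
rewrite ge0_integral_sum//.
under eq_integral do rewrite EFinM.
rewrite ge0_integralZl ?lee_fin ?subr_ge0//; last 2 first.
- exact/measurable_EFinP.
- by move=> w _; rewrite lee_fin.
apply: leeD => //; apply: lee_sum => t _.
rewrite le_eqVlt; apply/orP; left; apply/eqP; rewrite [RHS]integral_mkcond.
apply: eq_integral => w _; rewrite patchE indicE.
by case: ifP => _; rewrite ?mulr1 ?mulr0.
Qed.

Lemma integral_etilde_le1 (P : probability Omega R) :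
    (forall w, injective (I ^~ w)) -> 0 <= gamma -> gamma <= 1 ->
    (forall w, 0 <= E i w) -> (forall t w, 0 <= F t w) ->
    (\int[P]_w (E i w)%:E <= 1)%E ->
    (forall t, \int[P]_(w in [set w | I t w == i] `\` [set w | T t w]) (F t w)%:E
       <= gamma%:E * P [set w | I t w == i])%E ->
  (\int[P]_w (etilde gamma E I F T i w)%:E <= 1)%E.
Proof.
move=> hI g0 g1 E0 F0 intE1 unqueried_le.
have selected_once : (\sum_(t < K) P [set w | I t w == i] = 1)%E.
  apply: probability_partition_sum => // w.
  have [g Ig gI] := injF_bij (hI w).
  by exists (g i); split => [|t /eqP <-]; rewrite /= ?gI ?Ig.
apply: le_trans (integral_etilde_le P hI g1 E0 F0) _.
have queried_le : ((1 - gamma)%:E * \int[P]_w (E i w)%:E <= (1 - gamma)%:E)%E.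
  by rewrite -[leRHS]mule1 lee_wpmul2l ?lee_fin ?subr_ge0.
have sum_unqueried_le : (\sum_(t < K)
    \int[P]_(w in [set w | I t w == i] `\` [set w | T t w]) (F t w)%:E
    <= gamma%:E)%E.
  apply: (@le_trans _ _ (\sum_(t < K) gamma%:E * P [set w | I t w == i])%E).
    by apply: lee_sum => t _; exact: unqueried_le.
  by rewrite -ge0_sume_distrr// selected_once mule1.
by apply: le_trans (leeD queried_le sum_unqueried_le) _; rewrite -EFinD subrK.
Qed.

End integral_etilde.

Theorem proposition8 (R : realType) (d : measure_display) (Omega : measurableType d)
  (P : probability Omega R) (K : nat) (hK : (0 < K)%N) (gamma : R)
  (hg0 : 0 < gamma) (hg1 : gamma <= 1)
  (Null : {set 'I_K})
  (E : 'I_K -> Omega -> R)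
  (hEm : forall j, measurable_fun setT (E j))
  (hE0 : forall j w, 0 <= E j w)
  (hEnull : forall j, j \in Null -> (\int[P]_w (E j w)%:E <= 1)%E)
  (* the procedure: step t selects index I t, forms proxy F t, draws indicator T t *)
  (I : 'I_K -> Omega -> 'I_K) (F : 'I_K -> Omega -> R) (T : 'I_K -> Omega -> bool)
  (hInew : forall w, injective (fun t => I t w))
  (hF0 : forall t w, 0 <= F t w)
  (hTm : forall t, measurable [set w | T t w])
  (* H t : everything observed before drawing T t (together with all E_j) *)
  (dX : measure_display) (X : measurableType dX) (H : 'I_K -> Omega -> X)
  (hHm : forall t, measurable_fun setT (H t))
  (hHE : forall t j, exists e : X -> R, measurable_fun setT e /\ E j = e \o H t)
  (hHF : forall t, exists f : X -> R, measurable_fun setT f /\ F t = f \o H t)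
  (hHI : forall t, exists iota : X -> 'I_K,
           (forall i, measurable (iota @^-1` [set i])) /\ I t = iota \o H t)
  (hHT : forall t s : 'I_K, (s < t)%N -> exists tau : X -> bool,
           measurable (tau @^-1` [set true]) /\ T s = tau \o H t)
  (* conditional law: T t ~ Bern((1 - gamma / F t)_+) given H t *)
  (hTcond : forall t (A : set X), measurable A ->
     P (H t @^-1` A `&` [set w | T t w]) =
     (\int[P]_(w in H t @^-1` A) (bern_prob gamma (F t w))%:E)%E) :
  forall i, (forall w, 0 <= etilde gamma E I F T i w) /\
    (i \in Null -> (\int[P]_w (etilde gamma E I F T i w)%:E <= 1)%E).
Proof.
move=> i; split=> [w|iN]; first exact: etilde_ge0.
have selE t : exists2 iota : X -> 'I_K, measurable (iota @^-1` [set i]) &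
    [set w | I t w == i] = H t @^-1` (iota @^-1` [set i]).
  have [iota [miota ->]] := hHI t; exists iota => //.
  by apply/seteqP; split => w /= /eqP.
have mI t : measurable [set w | I t w == i].
  by have [iota mi ->] := selE t; rewrite -[X in measurable X]setTI; exact: hHm.
have mF t : measurable_fun setT (F t).
  by have [f [mf ->]] := hHF t; exact: measurableT_comp.
apply: (integral_etilde_le1 mI hTm (hEm i) mF P hInew (ltW hg0) hg1 (hE0 i) hF0
  (hEnull i iN)) => t.
have [iota mi ->] := selE t; have [f [mf Fe]] := hHF t; rewrite Fe.
apply: integral_unqueried_proxy_le => //; first exact: ltW.
  by move=> w; have := hF0 t w; rewrite Fe.
by move=> A mA; rewrite hTcond// Fe.
Qed.
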